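(* Let $K^1,K^2$, $\Theta^1,\Theta^2$, $\tau^1,\tau^2$, $\eta^{\{1,2\}}$ and the deterministic functions $\Lambda^{1},\Lambda^{2},\Lambda^{\{1,2\}}$ be as described in the context. Then for all $t_1,t_2,t$ with $0\le t\le \min(t_1,t_2)$, $$ \mathbb P(\tau^1>t_1,\tau^2>t_2\mid\mathcal F_t)= \begin{cases} \exp\left\{-\Lambda^{2}_{t_2}-\left(\Lambda^{\{1,2\}}_{t_1}-\Lambda^{2}_{t_1}\right)\right\}\eta^{\{1,2\}}_t, & \text{if } t_1\le t_2,\\[2pt] \exp\left\{-\Lambda^{1}_{t_1}-\left(\Lambda^{\{1,2\}}_{t_2}-\Lambda^{1}_{t_2}\right)\right\}\eta^{\{1,2\}}_t, & \text{if } t_2< t_1. \end{cases} $$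
   Context: Let $(\Omega,\mathcal G,\mathbb F,\mathbb P)$ be a filtered probability space, $\mathbb F=(\mathcal F_t)_{t\ge0}$ satisfying the usual conditions. For $i=1,2$, let $K^i$ be an $\mathbb F$-adapted, càdlàg, increasing process with $K^i_0=0$ (the processes $K^1,K^2$ may be dependent), and let $\Theta^1,\Theta^2$ be unit exponential random variables, independent of each other and of $\mathcal F_\infty$. Define $\tau^i:=\inf\{t\ge0: K^i_t\ge\Theta^i\}$, so that $\mathbb P(\tau^i>t\mid\mathcal F_t)=e^{-K^i_t}$. Put $K^{\{1,2\}}:=K^1+K^2$. For $J\in\{\{1\},\{2\},\{1,2\}\}$ (writing $K^{\{i\}}=K^i$), let $K^{J,c}$ be the continuous part of $K^J$, let $I^J_t:=\sum_{s\le t}(1-e^{-\Delta K^J_s})$ with canonical decomposition $I^J=M^{I^J}+A^{I^J}$ ($M^{I^J}$ an $\mathbb F$-local martingale, $A^{I^J}$ $\mathbb F$-predictable of finite variation), and set $\Lambda^J:=K^{J,c}+A^{I^J}$. Standing assumptions: for each such $J$, $K^{J,c}$ and $A^{I^J}$ are deterministic, $\Lambda^J$ is continuous (as holds when the associated random times are totally inaccessible), and the multiplicative decomposition $e^{-K^J_t}=\eta^J_t e^{-\Lambda^J_t}$ holds with $\eta^J$ a nonnegative $\mathbb F$-martingale with $\eta^J_0=1$. Here $\Lambda^{i}:=\Lambda^{\{i\}}$, $\eta^i:=\eta^{\{i\}}$. *)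

From HB Require Import structures.
From mathcomp Require Import all_boot all_order all_algebra.
From mathcomp Require Import all_classical all_reals all_analysis.
Set Implicit Arguments. Unset Strict Implicit. Unset Printing Implicit Defensive.
Import Order.TTheory GRing.Theory Num.Theory.
Import numFieldNormedType.Exports.
Local Open Scope classical_set_scope.
Local Open Scope ring_scope.

Section Defs.
Context {d : measure_display} {Ω : measurableType d} {R : realType}.
Variable P : probability Ω R.

(* Time is [0, +oo); processes are functions R -> Ω -> R, only their values
   at times t >= 0 matter. *)

Definition usual_filtration (F : R -> set (set Ω)) :=
  [/\ (forall t, 0 <= t -> sigma_algebra setT (F t) /\ F t `<=` measurable),
      (forall s t, 0 <= s -> s <= t -> F s `<=` F t),
      (forall t, 0 <= t -> F t = \bigcap_(s in `]t, +oo[) F s) &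
      (forall N, measurable N -> P N = 0%E -> forall A, A `<=` N -> F 0 A)].

Definition F_inf (F : R -> set (set Ω)) : set (set Ω) :=
  smallest (sigma_algebra setT) (\bigcup_(t in [set t : R | 0 <= t]) F t).

Definition measurable_wrt (G : set (set Ω)) (Y : Ω -> R) :=
  forall B : set R, measurable B -> G (Y @^-1` B).

Definition adapted (F : R -> set (set Ω)) (X : R -> Ω -> R) :=
  forall t, 0 <= t -> measurable_wrt (F t) (X t).

Definition cadlag (X : R -> Ω -> R) :=
  forall w t, 0 <= t ->
    (X ^~ w @ t^'+ --> X t w) /\ (0 < t -> cvg (X ^~ w @ t^'-)).

Definition increasing_proc (X : R -> Ω -> R) :=
  forall w s t, 0 <= s -> s <= t -> X s w <= X t w.

Definition jump (X : R -> Ω -> R) (t : R) (w : Ω) : R :=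
  if 0 < t then X t w - lim (X ^~ w @ t^'-) else 0.

Definition cont_part (X : R -> Ω -> R) (t : R) (w : Ω) : R :=
  X t w - fine (\esum_(s in `]0, t]) (jump X s w)%:E).

Definition Iproc (X : R -> Ω -> R) (t : R) (w : Ω) : R :=
  fine (\esum_(s in `]0, t]) (1 - expR (- jump X s w))%:E).

Definition martingale (F : R -> set (set Ω)) (M : R -> Ω -> R) :=
  [/\ adapted F M,
      (forall t, 0 <= t -> P.-integrable setT (EFin \o M t)) &
      (forall s t, 0 <= s -> s <= t -> forall A, F s A ->
         (\int[P]_(w in A) (M t w)%:E = \int[P]_(w in A) (M s w)%:E)%E)].

Definition stopping_time (F : R -> set (set Ω)) (T : Ω -> \bar R) :=
  (forall w, (0 <= T w)%E) /\
  (forall t, 0 <= t -> F t [set w | (T w <= t%:E)%E]).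

Definition stopped (M : R -> Ω -> R) (T : Ω -> \bar R) (t : R) (w : Ω) : R :=
  M (match T w with EFin r => Num.min t r | _ => t end) w.

Definition local_martingale (F : R -> set (set Ω)) (M : R -> Ω -> R) :=
  exists T : nat -> Ω -> \bar R,
    [/\ (forall n, stopping_time F (T n)),
        (forall n w, (T n w <= T n.+1 w)%E),
        {ae P, forall w, forall r : R, exists n, (r%:E < T n w)%E} &
        (forall n, martingale F (stopped M (T n)))].

Definition tau (X : R -> Ω -> R) (Θ : Ω -> R) (w : Ω) : \bar R :=
  ereal_inf [set t%:E | t in [set t : R | 0 <= t /\ Θ w <= X t w]].

Definition unit_exponential (Θ : Ω -> R) :=
  measurable_fun setT Θ /\
  forall x : R, 0 <= x -> P [set w | x < Θ w] = (expR (- x))%:E.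

Definition indep_Theta (F : R -> set (set Ω)) (Θ1 Θ2 : Ω -> R) :=
  forall A (B1 B2 : set R), F_inf F A -> measurable B1 -> measurable B2 ->
    P (A `&` Θ1 @^-1` B1 `&` Θ2 @^-1` B2)
    = (P A * P (Θ1 @^-1` B1) * P (Θ2 @^-1` B2))%E.

(* Standing assumptions for K^J, with K^{J,c} = c (deterministic),
   A^{I^J} = A (deterministic, predictable finite-variation part of the
   canonical decomposition of I^J), Lambda^J = c + A continuous, and
   exp(-K^J_t) = eta^J_t exp(-Lambda^J_t) with eta^J a nonnegative martingale,
   eta^J_0 = 1. *)
Definition standing (F : R -> set (set Ω)) (K : R -> Ω -> R)
    (c A : R -> R) (η : R -> Ω -> R) :=
  [/\ (forall w t, 0 <= t -> cont_part K t w = c t),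
      A 0 = 0 /\ (forall t, 0 <= t -> bounded_variation 0 t A),
      local_martingale F (fun t w => Iproc K t w - A t),
      {within `[0, +oo[, continuous (fun t => c t + A t)} &
      [/\ martingale F η, (forall t w, 0 <= t -> 0 <= η t w),
          (forall w, η 0 w = 1) &
          (forall t w, 0 <= t -> expR (- K t w) = η t w * expR (- (c t + A t)))]].

Definition cond_prob_version (G : set (set Ω)) (E : set Ω) (Y : Ω -> R) :=
  [/\ measurable_wrt G Y, P.-integrable setT (EFin \o Y) &
      forall A, G A -> P (A `&` E) = (\int[P]_(w in A) (Y w)%:E)%E].

End Defs.

From HB Require Import structures.
From mathcomp Require Import all_boot all_order all_algebra.
From mathcomp Require Import all_classical all_reals all_analysis.
From mathcomp Require Import measurable_realfun ring.
Import Order.TTheory GRing.Theory Num.Theory.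
Import numFieldNormedType.Exports.
Local Open Scope classical_set_scope.
Local Open Scope ring_scope.

(* For t1 <= t2 and A in F_{t2}, the thresholds are independent of F_{t2}, so
   P(A, K1_{t1} < Θ1, K2_{t2} < Θ2) = E[1_A exp(-K1_{t1}) exp(-K2_{t2})].  This
   freezing is obtained by cutting A into the F_{t2}-events on which K1_{t1} and
   K2_{t2} lie in fixed cells of width ε, where both sides agree up to a factor
   exp(2ε).  The martingale η2 gives E[1_S exp(-K2_{t2})] =
   exp(-(Λ2_{t2} - Λ2_{t1})) E[1_S exp(-K2_{t1})] for S in F_{t1}; cutting along
   the cells of K1_{t1} inserts the weight exp(-K1_{t1}) into this identity, which
   produces exp(-(K1 + K2)_{t1}) = η12_{t1} exp(-Λ12_{t1}), and the martingale η12
   then replaces η12_{t1} by η12_t. *)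

Lemma lt_tau (R : realType) (d : measure_display) (Ω : measurableType d)
  (K : R -> Ω -> R) (Θ : Ω -> R) (w : Ω) (t : R) :
  0 <= t -> K ^~ w @ t^'+ --> K t w ->
  (forall s, 0 <= s -> s <= t -> K s w <= K t w) ->
  (t%:E < tau K Θ w)%E <-> K t w < Θ w.
Proof.
move=> t0 Kcvg Kmono; split=> [tau_gt|KΘ].
  rewrite ltNge; apply/negP => ΘK; move: tau_gt; apply/negP; rewrite -leNgt.
  by apply: ge_ereal_inf; exists t%:E => //; exists t.
(* Right-continuity keeps [K < Θ] on ]t, t + e[ and monotonicity on [0, t],
   so the infimum is at least [t + e / 2]. *)
have := cvgr_lt _ Kcvg _ KΘ; rewrite near_withinE => -[e /= e0 Kbelow].
rewrite (@lt_le_trans _ _ (t + e / 2)%:E) ?lte_fin ?ltrDl ?divr_gt0//.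
apply: le_ereal_inf_tmp => _ [s [s0 ΘK] <-]; rewrite lee_fin leNgt.
apply/negP => ste; move: ΘK; apply/negP; rewrite -ltNge.
have [st|ts] := leP s t; first exact: le_lt_trans (Kmono s s0 st) KΘ.
apply: Kbelow (ts); rewrite /ball_ /= distrC ger0_norm ?subr_ge0 ?ltW// ltrBlDl.
by rewrite (lt_trans ste)// ltrD2l ltr_pdivrMr// ltr_pMr// ltr1n.
Qed.

Lemma tau_survival_event {R : realType} {d : measure_display} {Ω : measurableType d}
    {K1 K2 : R -> Ω -> R} {Θ1 Θ2 : Ω -> R} {t1 t2 : R} :
  cadlag K1 -> increasing_proc K1 -> cadlag K2 -> increasing_proc K2 ->
  0 <= t1 -> 0 <= t2 ->
  [set w | (t1%:E < tau K1 Θ1 w)%E /\ (t2%:E < tau K2 Θ2 w)%E] =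
  [set w | K1 t1 w < Θ1 w] `&` [set w | K2 t2 w < Θ2 w].
Proof.
move=> cK1 iK1 cK2 iK2 t10 t20.
have ltK (K : R -> Ω -> R) Θ s w : cadlag K -> increasing_proc K -> 0 <= s ->
    (s%:E < tau K Θ w)%E <-> K s w < Θ w.
  by move=> cK iK s0; apply: lt_tau s0 (cK w s s0).1 (fun u u0 => iK w u s u0).
by apply/seteqP; split => w /= [h1 h2]; split;
  [apply/(ltK _ _ _ _ cK1 iK1 t10) | apply/(ltK _ _ _ _ cK2 iK2 t20) |
   apply/(ltK _ _ _ _ cK1 iK1 t10) | apply/(ltK _ _ _ _ cK2 iK2 t20)].
Qed.

Lemma increasing_proc_ge0 {R : realType} {d : measure_display} {Ω : measurableType d}
    {K : R -> Ω -> R} :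
  increasing_proc K -> (forall w, K 0 w = 0) -> forall s w, 0 <= s -> 0 <= K s w.
Proof. by move=> iK K0 s w s0; rewrite -(K0 w); exact: iK. Qed.

Lemma indep_ThetaC {R : realType} {d : measure_display} {Ω : measurableType d}
    {P : probability Ω R} {F : R -> set (set Ω)} {Θ1 Θ2 : Ω -> R} :
  indep_Theta P F Θ1 Θ2 -> indep_Theta P F Θ2 Θ1.
Proof. by move=> indΘ A B1 B2 FA mB1 mB2; rewrite setIAC indΘ// muleAC. Qed.

Lemma measurable_wrtZ {R : realType} {d : measure_display} {Ω : measurableType d}
    {G : set (set Ω)} (k : R) {X : Ω -> R} :
  measurable_wrt G X -> measurable_wrt G (fun w => k * X w).
Proof.
move=> GX B mB.
have := measurable_funM (measurable_cst k) (@measurable_id _ _ setT) measurableT mB.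
by rewrite setTI => mkB; exact: GX _ mkB.
Qed.

Lemma expRN_mulrS {R : realType} (j : nat) (ε : R) :
  expR (- (j%:R * ε)) = expR ε * expR (- (j.+1%:R * ε)).
Proof. by rewrite -expRD -natr1; congr expR; ring. Qed.

Lemma lee_sandwich {R : realType} (u v m : \bar R) (lo κ : R) :
  0 <= κ -> (lo%:E * m <= v)%E -> (u <= (κ * lo)%:E * m)%E -> (u <= κ%:E * v)%E.
Proof.
move=> κ0 lov /le_trans; apply; rewrite EFinM -muleA.
by apply: lee_wpmul2l; rewrite ?lee_fin.
Qed.

Lemma ler_expR_squeeze {R : realType} (a b : R) :
  0 <= b -> (forall δ, 0 < δ -> a <= expR δ * b) -> a <= b.
Proof.
rewrite le_eqVlt => /predU1P[<-|b_gt0] aexp; apply/ler_addgt0Pr => e e0.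
  by have := aexp 1 ltr01; rewrite mulr0 add0r => /le_trans; apply; exact: ltW.
have zb1 : 1 < (b + e) / b by rewrite ltr_pdivlMr// mul1r ltrDl.
have := aexp _ (ln_gt0 zb1); rewrite lnK ?posrE ?divr_gt0 ?addr_gt0//.
by rewrite divfK ?gt_eqF.
Qed.

Lemma lee_expR_squeeze {R : realType} (a b : \bar R) :
  b \is a fin_num -> (0 <= b)%E ->
  (forall δ, 0 < δ -> (a <= (expR δ)%:E * b)%E) -> (a <= b)%E.
Proof.
move: a => [a| |] /fineK <- b0 aexp; last by rewrite leNye.
  by rewrite lee_fin; apply: ler_expR_squeeze => // δ /aexp; rewrite -EFinM lee_fin.
by have := aexp 1 ltr01; rewrite -EFinM leNgt ltey.
Qed.

Section cells.
Context {d : measure_display} {Ω : measurableType d} {R : realType}.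

Definition cell (X : Ω -> R) (ε : R) (j : nat) : set Ω :=
  X @^-1` `[j%:R * ε, j.+1%:R * ε[.

Lemma cellP X ε j w : cell X ε j w <-> j%:R * ε <= X w < j.+1%:R * ε.
Proof. by rewrite /cell /= in_itv. Qed.

Lemma cell_trivIset X ε : 0 < ε -> trivIset setT (cell X ε).
Proof.
move=> ε0 i j _ _ [w [/cellP/andP[iX Xi] /cellP/andP[jX Xj]]].
have ij : (i < j.+1)%N by rewrite -(ltr_nat R) -(ltr_pM2r ε0); exact: le_lt_trans iX Xj.
have ji : (j < i.+1)%N by rewrite -(ltr_nat R) -(ltr_pM2r ε0); exact: le_lt_trans jX Xi.
by apply/eqP; rewrite eqn_leq -ltnS ij -ltnS ji.
Qed.

Lemma bigcup_cell X ε : 0 < ε -> (forall w, 0 <= X w) ->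
  \bigcup_j cell X ε j = setT.
Proof.
move=> ε0 X0; apply/seteqP; split => // w _.
have /andP[lo hi] := truncn_itv (divr_ge0 (X0 w) (ltW ε0)).
by exists (Num.truncn (X w / ε)) => //; apply/cellP; rewrite -ler_pdivlMr// -ltr_pdivrMr// lo.
Qed.

Lemma measurable_wrt_cell G X ε j : measurable_wrt G X -> G (cell X ε j).
Proof. by apply; exact: measurable_itv. Qed.

End cells.

Section integral_partition.
Context {d : measure_display} {Ω : measurableType d} {R : realType}.
Variables (P : probability Ω R) (C : nat -> set Ω).
Hypotheses (mC : forall i, measurable (C i)) (tC : trivIset setT C)
  (coverC : \bigcup_i C i = setT).
Local Open Scope ereal_scope.

Lemma integral_partition (S : set Ω) (f : Ω -> R) :
  measurable S -> measurable_fun setT f -> (forall w, 0 <= f w)%R ->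
  \int[P]_(x in S) (f x)%:E = \sum_(i <oo) \int[P]_(x in S `&` C i) (f x)%:E.
Proof.
move=> mS mf f0; rewrite -{1}(setIT S) -coverC setI_bigcupr.
apply: ge0_integral_bigcup => //; first by move=> i; exact: measurableI.
- by apply/measurable_EFinP; exact: measurable_funS mf.
- by move=> w _; rewrite lee_fin.
- exact: trivIset_setIl.
Qed.

Lemma le_integral_partition (f g : Ω -> R) (S : set Ω) (κ : R) :
  measurable S -> measurable_fun setT f -> measurable_fun setT g ->
  (forall w, 0 <= f w)%R -> (forall w, 0 <= g w)%R -> (0 <= κ)%R ->
  (forall i, \int[P]_(x in S `&` C i) (f x)%:E
             <= κ%:E * \int[P]_(x in S `&` C i) (g x)%:E) ->
  \int[P]_(x in S) (f x)%:E <= κ%:E * \int[P]_(x in S) (g x)%:E.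
Proof.
move=> mS mf mg f0 g0 κ0 fg; rewrite !(integral_partition S)// -nneseriesZl.
  by apply: lee_nneseries => // i _ _; apply: integral_ge0 => w _; rewrite lee_fin.
by move=> i _; apply: integral_ge0 => w _; rewrite lee_fin.
Qed.

End integral_partition.

Section within_factor.
Context {d : measure_display} {Ω : measurableType d} {R : realType}.
Variables (P : probability Ω R) (G : set (set Ω)).
Hypotheses (sigmaG : sigma_algebra setT G) (Gm : G `<=` measurable).
Variables (f g : Ω -> R).
Hypotheses (mf : measurable_fun setT f) (mg : measurable_fun setT g)
  (f0 : forall w, 0 <= f w) (g0 : forall w, 0 <= g w).
Local Open Scope ereal_scope.

Definition within_factor_on (D : set Ω) (κ : R) := forall S, G S -> S `<=` D ->
  \int[P]_(x in S) (f x)%:E <= κ%:E * \int[P]_(x in S) (g x)%:E /\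
  \int[P]_(x in S) (g x)%:E <= κ%:E * \int[P]_(x in S) (f x)%:E.

Let GI : setI_closed G.
Proof. by have [] := (sigma_algebraP (fun X _ => subsetT X)).1 sigmaG. Qed.

Lemma within_factor_on_partition (D : set Ω) (C : nat -> set Ω) (κ : R) :
  (0 <= κ)%R -> (forall i, G (C i)) -> trivIset setT C -> \bigcup_i C i = setT ->
  (forall i, within_factor_on (D `&` C i) κ) -> within_factor_on D κ.
Proof.
move=> κ0 GC tC coverC wC S GS SD.
have mC i : measurable (C i) by exact/Gm/GC.
have wSC i := wC i _ (GI _ _ GS (GC i)) (setSI SD).
by split; apply: (le_integral_partition P C mC tC coverC) => //;
  [exact: Gm | move=> i; case: (wSC i) | exact: Gm | move=> i; case: (wSC i)].
Qed.

Lemma eq_integral_within_expR (A : set Ω) :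
  (forall δ, (0 < δ)%R -> within_factor_on setT (expR δ)) -> G A ->
  \int[P]_(x in A) (g x)%:E \is a fin_num ->
  \int[P]_(x in A) (f x)%:E = \int[P]_(x in A) (g x)%:E.
Proof.
move=> wδ GA gfin; have wA δ δ0 := wδ δ δ0 A GA (subsetT A).
have int_ge0 (h : Ω -> R) : (forall w, 0 <= h w)%R -> 0 <= \int[P]_(x in A) (h x)%:E.
  by move=> h0; apply: integral_ge0 => w _; rewrite lee_fin.
have ffin : \int[P]_(x in A) (f x)%:E \is a fin_num.
  rewrite ge0_fin_numE ?int_ge0//; apply: le_lt_trans (wA 1%R ltr01).1 _.
  by rewrite -(fineK gfin) -EFinM ltry.
by apply/le_anti/andP; split; apply: lee_expR_squeeze;
  rewrite ?int_ge0// => δ δ0; case: (wA δ δ0).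
Qed.

End within_factor.

Section integral_bounds.
Context {d : measure_display} {Ω : measurableType d} {R : realType}.
Variable P : probability Ω R.
Local Open Scope ereal_scope.

Lemma measurable_lt (f g : Ω -> R) : measurable_fun setT f -> measurable_fun setT g ->
  measurable [set w | f w < g w]%R.
Proof. by move=> mf mg; rewrite -[X in measurable X]setTI; exact: measurable_fun_ltr. Qed.

Lemma measurable_fun_wrt {G : set (set Ω)} {X : Ω -> R} :
  G `<=` measurable -> measurable_wrt G X -> measurable_fun setT X.
Proof. by move=> Gm GX _ B mB; rewrite setTI; exact/Gm/GX. Qed.

Lemma measurable_expRN {X : Ω -> R} :
  measurable_fun setT X -> measurable_fun setT (fun x => expR (- X x)).
Proof. by move=> mX; apply: measurableT_comp => //; exact: measurableT_comp. Qed.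

Lemma integral_weight_bounds {S : set Ω} {h g : Ω -> R} {a b : R} :
  measurable S -> measurable_fun setT h -> measurable_fun setT g ->
  (forall w, 0 <= g w)%R -> (0 <= a)%R -> (a <= b)%R ->
  (forall w, S w -> a <= h w <= b)%R ->
  a%:E * \int[P]_(x in S) (g x)%:E <= \int[P]_(x in S) (h x * g x)%:E /\
  \int[P]_(x in S) (h x * g x)%:E <= b%:E * \int[P]_(x in S) (g x)%:E.
Proof.
move=> mS mh mg g0 a0 ab hS.
have mS_ (f : Ω -> R) : measurable_fun setT f -> measurable_fun S (EFin \o f).
  by move=> mf; apply/measurable_EFinP; exact: measurable_funS mf.
have mgS := mS_ _ mg; have mhgS := mS_ _ (measurable_funM mh mg).
have gS0 x : S x -> 0 <= (g x)%:E by rewrite lee_fin.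
have b0 := le_trans a0 ab.
have cgS c : measurable_fun S (fun x => c%:E * (g x)%:E).
  by under eq_fun do rewrite -EFinM; exact: mS_ _ (measurable_funM (measurable_cst c) mg).
rewrite -!ge0_integralZl_EFin//; split; apply: ge0_le_integral => // w Sw;
  have /andP[aw wb] := hS w Sw; rewrite -?EFinM lee_fin ?mulr_ge0 ?ler_wpM2r//.
exact: le_trans aw.
Qed.

Lemma integral_fin_num_le_integrable {A : set Ω} {f g : Ω -> R} :
  measurable A -> measurable_fun setT f -> (forall x, `|f x| <= `|g x|)%R ->
  P.-integrable setT (EFin \o g) -> \int[P]_(x in A) (f x)%:E \is a fin_num.
Proof.
move=> mA mf fg ig; apply: (integrable_fin_num mA).
apply: integrableS measurableT mA (subsetT _) (le_integrable measurableT _ _ ig).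
  exact/measurable_EFinP.
by move=> x _; rewrite lee_fin.
Qed.

End integral_bounds.

Section frozen_thresholds.
Context {d : measure_display} {Ω : measurableType d} {R : realType}.
Variables (P : probability Ω R) (G : set (set Ω)).
Hypotheses (sigmaG : sigma_algebra setT G) (Gm : G `<=` measurable).
Local Open Scope ereal_scope.

Lemma integral_expRN_weight_eq {X g1 g2 : Ω -> R} (c : R) :
  measurable_wrt G X -> (forall w, 0 <= X w)%R ->
  measurable_fun setT g1 -> measurable_fun setT g2 ->
  (forall w, 0 <= g1 w)%R -> (forall w, 0 <= g2 w)%R -> (forall w, g2 w <= c)%R ->
  (forall S, G S -> \int[P]_(x in S) (g1 x)%:E = \int[P]_(x in S) (g2 x)%:E) ->
  forall A, G A -> \int[P]_(x in A) (expR (- X x) * g1 x)%:E =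
                   \int[P]_(x in A) (expR (- X x) * g2 x)%:E.
Proof.
move=> GX X0 mg1 mg2 g10 g20 g2c eqg A GA.
have mw := measurable_expRN (measurable_fun_wrt Gm GX).
have mwg g : measurable_fun setT g -> measurable_fun setT (fun x => expR (- X x) * g x)%R.
  by move=> mg; exact: measurable_funM.
have wg0 g : (forall w, 0 <= g w)%R -> forall w, (0 <= expR (- X w) * g w)%R.
  by move=> g0 w; rewrite mulr_ge0 ?expR_ge0.
apply: (eq_integral_within_expR P G _ _ (wg0 _ g10) (wg0 _ g20)) => //.
- move=> δ δ0; apply: (within_factor_on_partition P G sigmaG Gm _ _ (mwg _ mg1)
    (mwg _ mg2) (wg0 _ g10) (wg0 _ g20) _ (cell X δ)) => //;
    [by move=> ?; exact: measurable_wrt_cell | exact: cell_trivIset |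
     exact: bigcup_cell | move=> j S GS; rewrite setTI => SX].
  have Xbounds w : S w -> (expR (- (j.+1%:R * δ)) <= expR (- X w) <= expR (- (j%:R * δ)))%R.
    by move=> /SX/cellP/andP[jX Xj]; rewrite !ler_expR !lerN2 jX ltW.
  have lohi : (expR (- (j.+1%:R * δ)) <= expR (- (j%:R * δ)))%R.
    by rewrite ler_expR lerN2 ler_pM2r// ler_nat.
  have mS := Gm _ GS.
  have [lo1 hi1] := integral_weight_bounds P mS mw mg1 g10 (expR_ge0 _) lohi Xbounds.
  have [lo2 hi2] := integral_weight_bounds P mS mw mg2 g20 (expR_ge0 _) lohi Xbounds.
  rewrite expRN_mulrS in hi1 hi2; rewrite (eqg S GS) in lo1 hi1.
  by split; [exact: lee_sandwich (expR_ge0 _) lo2 hi1 |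
             exact: lee_sandwich (expR_ge0 _) lo1 hi2].
- apply: (integral_fin_num_le_integrable P (Gm _ GA) (mwg _ mg2) (g := cst c)).
    move=> x; rewrite ger0_norm ?wg0// (le_trans _ (ler_norm c))//.
    by rewrite (le_trans _ (g2c x))// ler_piMl ?expR_le1 ?oppr_le0.
  exact (finite_measure_integrable_cst P _ measurableT).
Qed.

Section thresholds.
Variables (Θ1 Θ2 X Y : Ω -> R).
Hypotheses (mΘ1 : measurable_fun setT Θ1) (mΘ2 : measurable_fun setT Θ2).
Hypothesis tails : forall S x y, G S -> (0 <= x)%R -> (0 <= y)%R ->
  P (S `&` [set w | x < Θ1 w]%R `&` [set w | y < Θ2 w]%R) =
  (expR (- x) * expR (- y))%:E * P S.
Hypotheses (GX : measurable_wrt G X) (GY : measurable_wrt G Y)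
  (X0 : forall w, (0 <= X w)%R) (Y0 : forall w, (0 <= Y w)%R).

Let E := [set w | X w < Θ1 w]%R `&` [set w | Y w < Θ2 w]%R.
Let h x := (expR (- X x) * expR (- Y x))%R.

Let mE : measurable E.
Proof. by apply: measurableI; apply: measurable_lt => //; exact: measurable_fun_wrt Gm _. Qed.

Let mh : measurable_fun setT h.
Proof. by apply: measurable_funM; exact/measurable_expRN/(measurable_fun_wrt Gm). Qed.

Let h0 x : (0 <= h x)%R. Proof. by rewrite mulr_ge0 ?expR_ge0. Qed.

Let E0 x : (0 <= \1_E x :> R)%R. Proof. by rewrite indicE ler0n. Qed.

Lemma within_factor_on_thresholds_cells (ε : R) (j k : nat) : (0 < ε)%R ->
  within_factor_on P G \1_E h (cell X ε j `&` cell Y ε k) (expR (ε + ε)).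
Proof.
move=> ε0 S GS; rewrite subsetI => -[SX SY]; have mS := Gm _ GS.
have nε0 (n : nat) : (0 <= n%:R * ε)%R by apply: mulr_ge0; rewrite ?ler0n ?ltW.
set lo := (expR (- (j.+1%:R * ε)) * expR (- (k.+1%:R * ε)))%R.
set hi := (expR (- (j%:R * ε)) * expR (- (k%:R * ε)))%R.
have hilo : hi = (expR (ε + ε) * lo)%R.
  by rewrite /hi (expRN_mulrS j) (expRN_mulrS k) expRD /lo; ring.
have mSΘ x y : measurable (S `&` [set w | x < Θ1 w]%R `&` [set w | y < Θ2 w]%R).
  by apply: measurableI; [apply: measurableI => //|]; exact: measurable_lt.
have E_hi : P (E `&` S) <= (expR (ε + ε) * lo)%:E * P S.
  rewrite -hilo -tails//; apply: le_measure; rewrite ?inE; [exact: measurableI|exact: mSΘ|].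
  move=> w [[XΘ YΘ] Sw]; have /cellP/andP[jX _] := SX w Sw; have /cellP/andP[kY _] := SY w Sw.
  by split; [split|]; [|exact: le_lt_trans jX XΘ|exact: le_lt_trans kY YΘ].
have E_lo : lo%:E * P S <= P (E `&` S).
  rewrite -tails//; apply: le_measure; rewrite ?inE; [exact: mSΘ|exact: measurableI|].
  move=> w [[Sw Θj] Θk]; have /cellP/andP[_ Xj] := SX w Sw; have /cellP/andP[_ Yk] := SY w Sw.
  by split; [split|]; [exact: lt_trans Xj Θj|exact: lt_trans Yk Θk|].
have h_bounds w : S w -> (lo <= h w <= hi)%R.
  move=> Sw; have /cellP/andP[jX Xj] := SX w Sw; have /cellP/andP[kY Yk] := SY w Sw.
  rewrite /lo /hi /h; apply/andP; split; apply: ler_pM;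
    rewrite ?expR_ge0 ?ler_expR ?lerN2//; exact: ltW.
have lohi : (lo <= hi)%R.
  by rewrite /lo /hi ler_pM ?expR_ge0// ler_expR lerN2 ler_pM2r// ler_nat.
have [h_lo h_hi] := integral_weight_bounds P mS mh (measurable_cst (1%R : R))
  (fun=> ler01) (mulr_ge0 (expR_ge0 _) (expR_ge0 _)) lohi h_bounds.
have intS1 : \int[P]_(x in S) (cst 1%R x)%:E = P S by rewrite -[RHS]mul1e -integral_cst.
have inth1 : \int[P]_(x in S) (h x * cst 1%R x)%:E = \int[P]_(x in S) (h x)%:E.
  by apply: eq_integral => x _; rewrite mulr1.
rewrite intS1 inth1 hilo in h_lo h_hi; rewrite integral_indic//.
by split; [exact: lee_sandwich (expR_ge0 _) h_lo E_hi |
           exact: lee_sandwich (expR_ge0 _) E_lo h_hi].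
Qed.

Lemma prob_lt_indep_exponentials A : G A ->
  P (A `&` ([set w | X w < Θ1 w]%R `&` [set w | Y w < Θ2 w]%R)) =
  \int[P]_(x in A) (expR (- X x) * expR (- Y x))%:E.
Proof.
move=> GA; rewrite setIC -integral_indic//; last exact: Gm.
apply: (eq_integral_within_expR P G _ _ E0 h0) => //.
- move=> δ δ0; rewrite (splitr δ); have ε0 : (0 < δ / 2)%R by rewrite divr_gt0.
  have GC Z : measurable_wrt G Z -> forall i, G (cell Z (δ / 2)%R i).
    by move=> GZ i; exact: measurable_wrt_cell.
  apply: (within_factor_on_partition P G sigmaG Gm _ _ (measurable_indic mE) mh E0 h0 _
    (cell X _)) => //; [exact: GC | exact: cell_trivIset | exact: bigcup_cell | move=> j].
  apply: (within_factor_on_partition P G sigmaG Gm _ _ (measurable_indic mE) mh E0 h0 _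
    (cell Y _)) => //; [exact: GC | exact: cell_trivIset | exact: bigcup_cell | move=> k].
  by rewrite setTI; exact: within_factor_on_thresholds_cells.
- apply: (integral_fin_num_le_integrable P (Gm _ GA) mh (g := cst 1%R)).
    move=> x; rewrite ger0_norm ?h0// normr1 /h -expRD expR_le1.
    by rewrite -opprD oppr_le0 addr_ge0.
  exact (finite_measure_integrable_cst P _ measurableT).
Qed.

End thresholds.

End frozen_thresholds.
Section survival.
Context {d : measure_display} {Ω : measurableType d} {R : realType}.
Variables (P : probability Ω R) (F : R -> set (set Ω)).
Hypotheses (Fsigma : forall s, 0 <= s -> sigma_algebra setT (F s) /\ F s `<=` measurable)
  (Fmono : forall s u, 0 <= s -> s <= u -> F s `<=` F u).

Let Fmeas {s} (s0 : 0 <= s) : F s `<=` measurable := (Fsigma _ s0).2.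

Lemma martingale_integralZ {M : R -> Ω -> R} {k s t : R} {S : set Ω} :
  martingale P F M -> 0 <= s -> s <= t -> F s S ->
  (\int[P]_(w in S) (k * M t w)%:E = \int[P]_(w in S) (k * M s w)%:E)%E.
Proof.
move=> [_ intM martM] s0 st FS; have mS := Fmeas s0 _ FS.
have intS u : 0 <= u -> P.-integrable S (EFin \o M u).
  by move=> u0; exact: integrableS measurableT mS (subsetT _) (intM u u0).
under eq_integral do rewrite EFinM; under [RHS]eq_integral do rewrite EFinM.
rewrite (integralZl mS (intS t (le_trans s0 st))) (integralZl mS (intS s s0)).
by rewrite (martM s t s0 st S FS).
Qed.

Lemma indep_exponential_tails {Θ1 Θ2 : Ω -> R} :
  unit_exponential P Θ1 -> unit_exponential P Θ2 -> indep_Theta P F Θ1 Θ2 ->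
  forall s S x y, 0 <= s -> F s S -> 0 <= x -> 0 <= y ->
    P (S `&` [set w | x < Θ1 w] `&` [set w | y < Θ2 w]) =
    ((expR (- x) * expR (- y))%:E * P S)%E.
Proof.
move=> [_ tail1] [_ tail2] indΘ s S x y s0 FS x0 y0.
have preimE (Θ : Ω -> R) z : Θ @^-1` `]z, +oo[ = [set w | z < Θ w].
  by apply/seteqP; split => w /=; rewrite in_itv /= andbT.
have FinfS : F_inf F S by apply: sub_sigma_algebra; exists s.
rewrite -!preimE indΘ ?measurable_itv// !preimE tail1// tail2//.
by rewrite EFinM [RHS]muleC muleA.
Qed.

Lemma survival_ordered {K1 K2 : R -> Ω -> R} {Θ1 Θ2 : Ω -> R}
    {η2 η12 : R -> Ω -> R} {L2 L12 : R -> R} {t1 t2 t : R} :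
  adapted F K1 -> adapted F K2 ->
  (forall s w, 0 <= s -> 0 <= K1 s w) -> (forall s w, 0 <= s -> 0 <= K2 s w) ->
  measurable_fun setT Θ1 -> measurable_fun setT Θ2 ->
  (forall s S x y, 0 <= s -> F s S -> 0 <= x -> 0 <= y ->
     P (S `&` [set w | x < Θ1 w] `&` [set w | y < Θ2 w]) =
     ((expR (- x) * expR (- y))%:E * P S)%E) ->
  martingale P F η2 ->
  (forall s w, 0 <= s -> expR (- K2 s w) = η2 s w * expR (- L2 s)) ->
  martingale P F η12 ->
  (forall s w, 0 <= s -> expR (- (K1 s w + K2 s w)) = η12 s w * expR (- L12 s)) ->
  0 <= t -> t <= t1 -> t1 <= t2 -> forall A, F t A ->
  P (A `&` ([set w | K1 t1 w < Θ1 w] `&` [set w | K2 t2 w < Θ2 w])) =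
  (\int[P]_(w in A) (expR (- L2 t2 - (L12 t1 - L2 t1)) * η12 t w)%:E)%E.
Proof.
move=> aK1 aK2 K1_ge0 K2_ge0 mΘ1 mΘ2 tails mart2 dec2 mart12 dec12 t0 tt1 t12 A FA.
have t10 := le_trans t0 tt1; have t20 := le_trans t10 t12.
have FA1 := Fmono _ _ t0 tt1 _ FA; have FA2 := Fmono _ _ t10 t12 _ FA1.
have K1_F2 : measurable_wrt (F t2) (K1 t1).
  by move=> B mB; exact: Fmono _ _ t10 t12 _ (aK1 _ t10 _ mB).
rewrite (prob_lt_indep_exponentials P _ (Fsigma _ t20).1 (Fmeas t20) _ _ _ _ mΘ1 mΘ2
  (fun S x y => tails t2 S x y t20) K1_F2 (aK2 _ t20) (K1_ge0 _ ^~ t10) (K2_ge0 _ ^~ t20)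
  _ FA2).
set Δ := L2 t2 - L2 t1.
have mK s : 0 <= s -> measurable_fun setT (fun w => expR (- K2 s w)).
  by move=> s0; exact/measurable_expRN/(measurable_fun_wrt (Fmeas s0))/aK2.
have K2_t2_t1 S : F t1 S -> (\int[P]_(w in S) (expR (- K2 t2 w))%:E =
    \int[P]_(w in S) (expR (- Δ) * expR (- K2 t1 w))%:E)%E.
  move=> FS; under eq_integral do rewrite dec2// mulrC.
  rewrite (martingale_integralZ mart2 t10 t12 FS).
  apply: eq_integral => w _; rewrite dec2// mulrCA -expRD mulrC.
  by congr (EFin (_ * expR _)); rewrite /Δ; ring.
have g2_le w : expR (- Δ) * expR (- K2 t1 w) <= expR (- Δ).
  by rewrite ler_piMr ?expR_ge0// expR_le1 oppr_le0 K2_ge0.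
rewrite (integral_expRN_weight_eq P _ (Fsigma _ t10).1 (Fmeas t10) _ (aK1 _ t10)
  (K1_ge0 _ ^~ t10) (mK _ t20) (measurable_funM (measurable_cst _) (mK _ t10))
  (fun=> expR_ge0 _) _ g2_le K2_t2_t1 _ FA1); last first.
  by move=> w; rewrite mulr_ge0 ?expR_ge0.
transitivity (\int[P]_(w in A) (expR (- L2 t2 - (L12 t1 - L2 t1)) * η12 t1 w)%:E)%E.
  apply: eq_integral => w _; rewrite mulrCA -expRD -opprD dec12// mulrCA -expRD mulrC.
  by congr (EFin (expR _ * _)); rewrite /Δ; ring.
exact: martingale_integralZ mart12 t0 tt1 FA.
Qed.

End survival.

Theorem theorem3p1 (R : realType) (d : measure_display) (Ω : measurableType d)
  (P : probability Ω R) (F : R -> set (set Ω))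
  (K1 K2 : R -> Ω -> R) (Θ1 Θ2 : Ω -> R)
  (c1 c2 c12 A1 A2 A12 : R -> R) (η1 η2 η12 : R -> Ω -> R) :
  usual_filtration P F ->
  adapted F K1 -> cadlag K1 -> increasing_proc K1 -> (forall w, K1 0 w = 0) ->
  adapted F K2 -> cadlag K2 -> increasing_proc K2 -> (forall w, K2 0 w = 0) ->
  unit_exponential P Θ1 -> unit_exponential P Θ2 -> indep_Theta P F Θ1 Θ2 ->
  standing P F K1 c1 A1 η1 ->
  standing P F K2 c2 A2 η2 ->
  standing P F (fun t w => K1 t w + K2 t w) c12 A12 η12 ->
  let L1 := fun t => c1 t + A1 t in
  let L2 := fun t => c2 t + A2 t in
  let L12 := fun t => c12 t + A12 t in
  forall t1 t2 t : R, 0 <= t -> t <= Num.min t1 t2 ->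
    cond_prob_version P (F t)
      [set w | (t1%:E < tau K1 Θ1 w)%E /\ (t2%:E < tau K2 Θ2 w)%E]
      (fun w => (if t1 <= t2
                 then expR (- L2 t2 - (L12 t1 - L2 t1))
                 else expR (- L1 t1 - (L12 t2 - L1 t2))) * η12 t w).
Proof.
move=> [Fsigma Fmono _ _] aK1 cK1 iK1 K1_0 aK2 cK2 iK2 K2_0 uΘ1 uΘ2 indΘ
  [_ _ _ _ [mart1 _ _ dec1]] [_ _ _ _ [mart2 _ _ dec2]] [_ _ _ _ [mart12 _ _ dec12]]
  L1 L2 L12 t1 t2 t t0; rewrite le_min => /andP[tt1 tt2].
have [K1_ge0 K2_ge0] := (increasing_proc_ge0 iK1 K1_0, increasing_proc_ge0 iK2 K2_0).
have tails12 := indep_exponential_tails _ _ uΘ1 uΘ2 indΘ.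
have tails21 := indep_exponential_tails _ _ uΘ2 uΘ1 (indep_ThetaC indΘ).
have dec21 s w : 0 <= s -> expR (- (K2 s w + K1 s w)) = η12 s w * expR (- L12 s).
  by rewrite addrC; exact: dec12.
have [aη12 intη12 _] := mart12.
split; first exact: measurable_wrtZ _ (aη12 t t0).
  exact (integrableZl measurableT _ (intη12 t t0)).
move=> A FA; rewrite (tau_survival_event cK1 iK1 cK2 iK2 (le_trans t0 tt1) (le_trans t0 tt2)).
case: leP => [t12|t21].
  exact: (survival_ordered (L2 := L2) _ _ Fsigma Fmono aK1 aK2 K1_ge0 K2_ge0 uΘ1.1 uΘ2.1
    tails12 mart2 dec2 mart12 dec12 t0 tt1 t12 _ FA).
rewrite (setIC [set w | K1 t1 w < Θ1 w]).
exact: (survival_ordered (L2 := L1) _ _ Fsigma Fmono aK2 aK1 K2_ge0 K1_ge0 uΘ2.1 uΘ1.1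
  tails21 mart1 dec1 mart12 dec21 t0 tt2 (ltW t21) _ FA).
Qed.
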